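(* Let $(a_n)_{n\ge1}$ be an integer sequence such that $(na_n)_{n\ge1}$ is an Euler sequence. Then $(na_n)_{n\ge1}$ is an Euler–Gauss sequence. Moreover, for an integer sequence $(b_n)_{n\ge1}$, the sequence $(nb_n)_{n\ge1}$ is a Gauss sequence if and only if $b_n=0$ for all $n\ge1$.
   Context: $\mu$ is the Möbius function. An Euler sequence is an integer sequence $(c_n)$ with $c_{p^r}\equiv c_{p^{r-1}}\pmod{p^r}$ for all primes $p$ and integers $r\ge1$. For an integer sequence $(c_n)$ and $n\ge1$, $C_n^+=\prod_{d\mid n,\ \mu(d)=1} c_{n/d}$ and $C_n^-=\prod_{d\mid n,\ \mu(d)=-1} c_{n/d}$ (empty products equal $1$); $(c_n)$ is an Euler–Gauss sequence if $C_n^+\equiv C_n^-\pmod n$ for all $n\ge1$, and a Gauss sequence if $\sum_{d\mid n}\mu(d)c_{n/d}\equiv0\pmod n$ for all $n\ge1$. *)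

From mathcomp Require Import all_boot all_order all_algebra.
Set Implicit Arguments. Unset Strict Implicit. Unset Printing Implicit Defensive.
Import Order.TTheory GRing.Theory Num.Theory.
Local Open Scope ring_scope.

Definition moebius (n : nat) : int :=
  if (n == 0)%N then 0
  else if all (fun p => (logn p n <= 1)%N) (primes n)
       then (-1) ^+ size (primes n) else 0.

(* Integer sequences are functions nat -> int; index 0 is ignored. *)
Definition euler_seq (c : nat -> int) : Prop :=
  forall p r : nat, prime p -> (0 < r)%N ->
    (c (p ^ r)%N == c (p ^ r.-1)%N %[mod (p ^ r)%N])%Z.

Definition Cplus (c : nat -> int) (n : nat) : int :=
  \prod_(d <- divisors n | moebius d == 1) c (n %/ d)%N.

Definition Cminus (c : nat -> int) (n : nat) : int :=
  \prod_(d <- divisors n | moebius d == -1) c (n %/ d)%N.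

Definition euler_gauss_seq (c : nat -> int) : Prop :=
  forall n : nat, (0 < n)%N -> (Cplus c n == Cminus c n %[mod n])%Z.

Definition gauss_seq (c : nat -> int) : Prop :=
  forall n : nat, (0 < n)%N ->
    (n%:Z %| \sum_(d <- divisors n) moebius d * c (n %/ d)%N)%Z.

From mathcomp Require Import all_boot all_order all_algebra.
From mathcomp Require Import ring.
Set Implicit Arguments. Unset Strict Implicit. Unset Printing Implicit Defensive.
Import Order.TTheory GRing.Theory Num.Theory.
Local Open Scope ring_scope.

(* Write c n = n a n.  The Möbius function vanishes off squarefree numbers, so
   for n = p^r only d = 1 and d = p contribute: C^+ = c(p^r), C^- = c(p^(r-1)),
   and the Euler congruence is exactly the Euler–Gauss one.  If two distinct
   primes p, q divide n, then C^+ contains the factor c(n), divisible by n, and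
   C^- contains c(n/p) c(n/q), divisible by (n/p)(n/q) = n (n/pq); so both are
   0 modulo n.
   For the Gauss part, suppose b vanishes below m and pick a prime p > |m b m|.
   In the Möbius sum for n = m p the term d = p is -m b m; for any other
   divisor d, either p divides n/d (and hence c(n/d)), or p | d, d <> p, and
   then 0 < n/d < m.  So p | m b m, forcing m b m = 0. *)

Lemma moebius_primeX p k : prime p ->
  moebius (p ^ k) = if k == 0%N then 1 else if k == 1%N then -1 else 0.
Proof.
move=> p_pr; case: k => [|k]; first by rewrite expn0.
rewrite /moebius expn_eq0 (gtn_eqF (prime_gt0 p_pr)) /= primesX // primes_prime //=.
by rewrite pfactorK // andbT; case: k.
Qed.

Lemma moebius_prime p : prime p -> moebius p = -1.
Proof. by move=> p_pr; rewrite -(expn1 p) moebius_primeX. Qed.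

Lemma moebius_dvd_primeX p r d : prime p -> (d %| p ^ r)%N ->
  moebius d = if d == 1%N then 1 else if d == p then -1 else 0.
Proof.
move=> p_pr /(dvdn_pfactor _ _ p_pr) [k _ ->]; rewrite moebius_primeX //.
have p_gt1 := prime_gt1 p_pr.
case: k => [|[|k]]; rewrite ?expn0 ?expn1 ?eqxx ?(gtn_eqF p_gt1) //.
have p_lt : (p < p ^ k.+2)%N by rewrite -[ltnLHS](expn1 p) ltn_exp2l.
by rewrite !gtn_eqF // (ltn_trans p_gt1 p_lt).
Qed.

Section MoebiusProducts.

Variable c : nat -> int.

Lemma Cplus_primeX p r : prime p -> Cplus c (p ^ r) = c (p ^ r)%N.
Proof.
move=> p_pr; have pr_gt0 : (0 < p ^ r)%N by rewrite expn_gt0 prime_gt0.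
rewrite /Cplus big_mkcond (bigD1_seq 1%N) ?divisors_uniq -?dvdn_divisors //=.
rewrite divn1 big1_seq ?mulr1 // => d /andP[d_neq1].
rewrite -dvdn_divisors // => /(moebius_dvd_primeX p_pr) ->.
by rewrite (negbTE d_neq1); case: (d == p).
Qed.

Lemma Cminus_primeX p r : prime p -> (0 < r)%N ->
  Cminus c (p ^ r) = c (p ^ r.-1)%N.
Proof.
move=> p_pr r_gt0; have pr_gt0 : (0 < p ^ r)%N by rewrite expn_gt0 prime_gt0.
rewrite /Cminus big_mkcond (bigD1_seq p) ?divisors_uniq -?dvdn_divisors //=;
  last by rewrite dvdn_exp.
rewrite moebius_prime // eqxx big1_seq ?mulr1.
  by rewrite -{1}(prednK r_gt0) expnS mulKn ?prime_gt0.
move=> d /andP[d_neq_p]; rewrite -dvdn_divisors // => /(moebius_dvd_primeX p_pr).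
by rewrite (negbTE d_neq_p) => ->; case: (d == 1%N).
Qed.

Lemma dvdz_Cplus n : (0 < n)%N -> (c n %| Cplus c n)%Z.
Proof.
move=> n_gt0.
rewrite /Cplus big_mkcond (bigD1_seq 1%N) ?divisors_uniq -?dvdn_divisors //=.
by rewrite divn1 dvdz_mulr.
Qed.

Lemma dvdz_Cminus n p q : (0 < n)%N -> prime p -> prime q -> p != q ->
  (p %| n)%N -> (q %| n)%N -> (c (n %/ p) * c (n %/ q) %| Cminus c n)%Z.
Proof.
move=> n_gt0 p_pr q_pr p_neq_q p_dvd q_dvd.
rewrite /Cminus big_mkcond (bigD1_seq p) ?divisors_uniq -?dvdn_divisors //=.
rewrite big_mkcond (bigD1_seq q) ?divisors_uniq -?dvdn_divisors //=.
rewrite (eq_sym q) p_neq_q !moebius_prime // !eqxx mulrA.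
exact: dvdz_mulr.
Qed.

End MoebiusProducts.

Lemma dvdn_mul_divn n p q : (0 < p)%N -> (0 < q)%N -> (p * q %| n)%N ->
  (n %| n %/ p * (n %/ q))%N.
Proof.
move=> p_gt0 q_gt0 /dvdnP[k ->].
rewrite mulnA mulnK // mulnAC mulnK //.
by apply/dvdnP; exists k; ring.
Qed.

Lemma prime_power_or_two_primes n : (1 < n)%N ->
  (exists2 p, prime p & exists2 r, (0 < r)%N & n = (p ^ r)%N) \/
  (exists p q, [/\ prime p, prime q, p != q, (p %| n)%N & (q %| n)%N]).
Proof.
move=> n_gt1; have n_gt0 := ltnW n_gt1.
have p_pr := pdiv_prime n_gt1; have p_dvd := pdiv_dvd n.
set p := pdiv n in p_pr p_dvd *.
have [m p_coprime_m n_eq] := pfactor_coprime p_pr n_gt0.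
have m_gt0 : (0 < m)%N by move: n_gt0; rewrite n_eq muln_gt0 => /andP[].
have [m_eq1 | m_neq1] := eqVneq m 1%N.
  left; exists p => //; exists (logn p n); last by rewrite {1}n_eq m_eq1 mul1n.
  by rewrite logn_gt0 mem_primes p_pr n_gt0 p_dvd.
right; exists p, (pdiv m).
have m_gt1 : (1 < m)%N by rewrite ltn_neqAle eq_sym m_neq1.
have q_pr := pdiv_prime m_gt1.
split=> //; last by rewrite n_eq dvdn_mulr ?pdiv_dvd.
apply: contraTneq p_coprime_m => ->.
by rewrite prime_coprime // pdiv_dvd.
Qed.

Lemma euler_gauss_two_primes c n p q : (forall k, (k%:Z %| c k)%Z) ->
  (0 < n)%N -> prime p -> prime q -> p != q -> (p %| n)%N -> (q %| n)%N ->
  (Cplus c n == Cminus c n %[mod n])%Z.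
Proof.
move=> c_dvd n_gt0 p_pr q_pr p_neq_q p_dvd q_dvd.
have pq_dvd : (p * q %| n)%N.
  by rewrite Gauss_dvd ?p_dvd ?q_dvd // prime_coprime // dvdn_prime2 // (negbTE p_neq_q).
rewrite eqz_mod_dvd rpredB //.
  exact: dvdz_trans (c_dvd n) (dvdz_Cplus c n_gt0).
apply: dvdz_trans (dvdz_Cminus c n_gt0 p_pr q_pr p_neq_q p_dvd q_dvd).
apply: dvdz_trans (dvdz_mul (c_dvd _) (c_dvd _)).
by rewrite -PoszM dvdzE /= dvdn_mul_divn ?prime_gt0.
Qed.

Lemma euler_gauss_of_euler c : (forall k, (k%:Z %| c k)%Z) ->
  euler_seq c -> euler_gauss_seq c.
Proof.
move=> c_dvd c_euler n n_gt0.
have [-> | n_neq1] := eqVneq n 1%N; first by rewrite eqz_mod_dvd dvd1z.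
have n_gt1 : (1 < n)%N by rewrite ltn_neqAle eq_sym n_neq1.
have [[p p_pr [r r_gt0 ->]] | [p [q [p_pr q_pr p_neq_q p_dvd q_dvd]]]] :=
  prime_power_or_two_primes n_gt1.
  by rewrite Cplus_primeX // Cminus_primeX //; exact: c_euler.
exact: euler_gauss_two_primes p_pr q_pr p_neq_q p_dvd q_dvd.
Qed.

Definition moebius_transform (c : nat -> int) (n : nat) : int :=
  \sum_(d <- divisors n) moebius d * c (n %/ d)%N.

Lemma gauss_seq_eq0 c : (forall n, (0 < n)%N -> c n = 0) -> gauss_seq c.
Proof.
move=> c_eq0 n n_gt0; rewrite big_seq big1 ?dvdz0 => // d.
rewrite -dvdn_divisors // => d_dvd.
have d_gt0 := dvdn_gt0 n_gt0 d_dvd.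
by rewrite c_eq0 ?mulr0 // divn_gt0 // dvdn_leq.
Qed.

Lemma moebius_transform_mul_prime c m p : prime p -> (0 < m)%N ->
  (forall k, (p %| k)%N -> (p%:Z %| c k)%Z) ->
  (forall k, (0 < k < m)%N -> c k = 0) ->
  (p%:Z %| moebius_transform c (m * p) + c m)%Z.
Proof.
move=> p_pr m_gt0 c_dvd c_eq0; have p_gt0 := prime_gt0 p_pr.
have mp_gt0 : (0 < m * p)%N by rewrite muln_gt0 m_gt0.
rewrite /moebius_transform (bigD1_seq p) ?divisors_uniq -?dvdn_divisors ?dvdn_mull //=.
rewrite moebius_prime // mulnK // mulN1r addrAC addNr add0r big_seq_cond.
apply: rpred_sum => d /andP[]; rewrite -dvdn_divisors // => d_dvd d_neq_p.
have [p_dvd_quot | p_ndvd_quot] := boolP (p %| m * p %/ d)%N.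
  exact/dvdz_mull/c_dvd.
have : (p %| m * p %/ d * d)%N by rewrite divnK // dvdn_mull.
rewrite Euclid_dvdM // (negbTE p_ndvd_quot) /=.
case/dvdnP => e d_eq; rewrite d_eq in d_dvd d_neq_p *.
have e_gt0 : (0 < e)%N by move: (dvdn_gt0 mp_gt0 d_dvd); rewrite muln_gt0 => /andP[].
have e_gt1 : (1 < e)%N.
  by rewrite ltn_neqAle e_gt0 andbT; apply: contraNneq d_neq_p => <-; rewrite mul1n.
rewrite divnMr // c_eq0 ?mulr0 ?dvdz0 // ltn_Pdiv // andbT divn_gt0 //.
by rewrite dvdn_leq // -(dvdn_pmul2r p_gt0).
Qed.

Lemma dvdz_lt_eq0 (p : nat) (x : int) : (`|x| < p)%N -> (p%:Z %| x)%Z -> x = 0.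
Proof.
move=> x_lt; rewrite dvdzE /=; apply: contraTeq => x_neq0.
by rewrite gtnNdvd // absz_gt0.
Qed.

Lemma gauss_mul_index_eq0 b : gauss_seq (fun n => n%:Z * b n) ->
  forall n, (0 < n)%N -> b n = 0.
Proof.
move=> b_gauss; elim/ltn_ind => m IH m_gt0.
set x := m%:Z * b m.
have [p x_lt p_pr] := prime_above (absz x).
have p_dvd_transform : (p%:Z %| moebius_transform (fun n => n%:Z * b n) (m * p))%Z.
  apply: (dvdz_trans _ (b_gauss _ _)); first by rewrite dvdzE /= dvdn_mull.
  by rewrite muln_gt0 m_gt0 prime_gt0.
have p_dvd_x : (p%:Z %| x)%Z.
  rewrite -(rpredDl _ p_dvd_transform).
  apply: moebius_transform_mul_prime => // [k p_dvd_k | k /andP[k_gt0 k_lt]].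
  - by apply/dvdz_mulr; rewrite dvdzE.
  - by rewrite IH ?mulr0.
move/eqP: (dvdz_lt_eq0 x_lt p_dvd_x).
by rewrite mulf_eq0 -[0]/(Posz 0) eqz_nat (gtn_eqF m_gt0) => /eqP.
Qed.

Theorem theorem4 :
  (forall a : nat -> int,
      euler_seq (fun n => n%:Z * a n) ->
      euler_gauss_seq (fun n => n%:Z * a n)) /\
  (forall b : nat -> int,
      gauss_seq (fun n => n%:Z * b n) <-> (forall n : nat, (0 < n)%N -> b n = 0)).
Proof.
split=> [a | b]; first by apply: euler_gauss_of_euler => k; exact: dvdz_mulr.
split; first exact: gauss_mul_index_eq0.
by move=> b_eq0; apply: gauss_seq_eq0 => n n_gt0; rewrite b_eq0 ?mulr0.
Qed.
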